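(* Let $m,n$ be positive integers and $x>2$ real. Define $\alpha_j>0$ ($1\le j\le 2n-1$) and $\beta_k>0$ ($1\le k\le 2m-1$) by $$\cosh\alpha_j+\cos\frac{\pi j}{2n}=x=\cosh\beta_k+\cos\frac{\pi k}{2m}.$$ Then $$\prod_{j=1}^{2n-1}\left(\frac{\tanh(m\alpha_j)}{\sinh\alpha_j}\right)^{(-1)^j}=\prod_{k=1}^{2m-1}\left(\frac{\tanh(n\beta_k)}{\sinh\beta_k}\right)^{(-1)^k}.$$ *)

From Stdlib Require Import Reals.
Open Scope R_scope.

Fixpoint prod1 (N : nat) (f : nat -> R) : R :=
  match N with
  | O => 1
  | S p => prod1 p f * f (S p)
  end.

Definition sgnZ (j : nat) : Z := if Nat.even j then 1%Z else (-1)%Z.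

From Stdlib Require Import Reals Lra Lia.
From mathcomp Require ssreflect ssrfun ssrbool eqtype ssrnat seq ssralg poly Rstruct.
Open Scope R_scope.

(* With c = cosh a, tanh (m a) / sinh a = U_{m-1}(c) / T_m(c) for the Chebyshev
   polynomials T_m, U_{m-1}.  Both have leading coefficient 2^(m-1); the roots of
   T_m are cos (k pi / 2m) for odd k and those of U_{m-1} are cos (k pi / 2m) for
   even k, 0 < k < 2m.  Hence
     tanh (m a) / sinh a = prod_{k=1}^{2m-1} (cosh a - cos (k pi / 2m))^((-1)^k),
   and substituting cosh alpha_j = x - cos (j pi / 2n) turns each side of the
   theorem into the same double product
     prod_{j,k} (x - cos (j pi / 2n) - cos (k pi / 2m))^((-1)^(j+k)). *)

Definition cheb_sequence (y f1 : R) (f : nat -> R) : Prop :=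
  f O = 1 /\ f 1%nat = f1 /\ forall k, f (S (S k)) = 2 * y * f (S k) - f k.

Module Chebyshev.
Import ssreflect ssrfun ssrbool eqtype ssrnat seq ssralg poly Rstruct.
Import GRing.Theory.
Local Open Scope ring_scope.

(* [cheb_pair p0 p1 k] is the pair (P k, P (k+1)) for P 0 = p0, P 1 = p1 and
   P (k+2) = 2 X P (k+1) - P k. *)
Fixpoint cheb_pair (p0 p1 : {poly R}) (k : nat) : {poly R} * {poly R} :=
  match k with
  | O => (p0, p1)
  | S k => let (a, b) := cheb_pair p0 p1 k in (b, IZR 2 *: (b * 'X) - a)
  end.

Definition T (m : nat) : {poly R} := (cheb_pair 1 'X m).1.
Definition U (m : nat) : {poly R} := (cheb_pair 1 (IZR 2 *: 'X) m).1.

Lemma horner_cheb_pair p0 p1 (y f1 : R) (f : nat -> R) : cheb_sequence y f1 f ->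
  p0.[y] = 1 -> p1.[y] = f1 ->
  forall k, (cheb_pair p0 p1 k).1.[y] = f k /\ (cheb_pair p0 p1 k).2.[y] = f k.+1.
Proof.
move=> [f0 [f1E Hf]] H0 H1; elim=> [|k IH] /=; first by rewrite f0 f1E.
case: (cheb_pair p0 p1 k) IH => a b /= [IHa IHb]; split=> //.
by rewrite hornerD hornerN hornerZ hornerMX IHa IHb Hf (mulrC (f k.+1)) mulrA.
Qed.

Lemma two_neq0 : IZR 2 != 0 :> R.
Proof. by apply/eqP; change (IZR 2 <> IZR 0); lra. Qed.

Lemma cheb_pair_shape (p0 p1 : {poly R}) : size p0 = 1%N -> size p1 = 2%N -> forall k,
  [/\ size (cheb_pair p0 p1 k).1 = k.+1, size (cheb_pair p0 p1 k).2 = k.+2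
    & lead_coef (cheb_pair p0 p1 k).2 = lead_coef p1 * IZR 2 ^+ k].
Proof.
move=> H0 H1; elim=> [|k IH] /=; first by rewrite expr0 mulr1.
case: (cheb_pair p0 p1 k) IH => a b /= [Ha Hb Hlb].
have Hs : size (IZR 2 *: (b * 'X)) = k.+3.
  by rewrite size_scale ?two_neq0 // size_mulX -?size_poly_eq0 Hb.
have Hlt : (size (- a) < size (IZR 2 *: (b * 'X)))%N by rewrite size_polyN Hs Ha ltnS leqW.
split=> //; first by rewrite size_polyDl.
by rewrite lead_coefDl // lead_coefZ lead_coefMX Hlb exprS mulrCA.
Qed.

Lemma size_2X : size (IZR 2 *: ('X : {poly R})) = 2%N.
Proof. by rewrite size_scale ?two_neq0 // size_polyX. Qed.

Lemma horner_T (y : R) (f : nat -> R) : cheb_sequence y y f -> forall m, (T m).[y] = f m.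
Proof.
by move=> Hf m; case: (horner_cheb_pair 1 'X _ _ _ Hf _ _ m); rewrite ?hornerC ?hornerX.
Qed.

Lemma horner_U (y : R) (f : nat -> R) :
  cheb_sequence y (IZR 2 * y) f -> forall m, (U m).[y] = f m.
Proof.
move=> Hf m; case: (horner_cheb_pair 1 (IZR 2 *: 'X) _ _ _ Hf _ _ m) => //.
  by rewrite hornerC.
by rewrite hornerZ hornerX.
Qed.

Lemma size_T m : size (T m) = m.+1.
Proof. by case: (cheb_pair_shape 1 'X (size_poly1 _) (size_polyX _) m). Qed.

Lemma size_U m : size (U m) = m.+1.
Proof. by case: (cheb_pair_shape 1 (IZR 2 *: 'X) (size_poly1 _) size_2X m). Qed.

Lemma lead_coef_T m : lead_coef (T m.+1) = pow (IZR 2) m.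
Proof.
rewrite RpowE; case: (cheb_pair_shape 1 'X (size_poly1 _) (size_polyX _) m) => _ _.
by rewrite /T /=; case: (cheb_pair _ _ m) => a b /= ->; rewrite lead_coefX mul1r.
Qed.

Lemma lead_coef_U m : lead_coef (U m) = pow (IZR 2) m.
Proof.
rewrite RpowE; case: m => [|m]; first by rewrite /U /= lead_coef1 expr0.
case: (cheb_pair_shape 1 (IZR 2 *: 'X) (size_poly1 _) size_2X m) => _ _.
by rewrite /U /=; case: (cheb_pair _ _ m) => a b /= ->; rewrite lead_coefZ lead_coefX mulr1 exprS.
Qed.

Lemma horner_prod_roots d (p : {poly R}) (r : nat -> R) : size p = d.+1 ->
  (forall i j, (le 1 i /\ le i d) -> (le 1 j /\ le j d) -> r i = r j -> i = j) ->
  (forall i, (le 1 i /\ le i d) -> p.[r i] = 0) ->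
  forall y, p.[y] = lead_coef p * prod1 d (fun i => y - r i).
Proof.
elim: d p => [|d IH] p Hs Hinj Hr y.
  by rewrite [p in LHS]size1_polyC ?Hs // hornerC lead_coefE Hs /= mulr1.
have [q Hpq] : exists q, p = q * ('X - (r d.+1)%:P).
  by apply/factor_theorem/eqP/Hr; lia.
have Hsq : size q = d.+1.
  have q_neq0 : q != 0 by apply: contra_eqN Hs => /eqP q0; rewrite Hpq q0 mul0r size_poly0.
  by move: Hs; rewrite Hpq size_mul ?polyXsubC_eq0 // size_XsubC addn2; case.
have Hrq i : (le 1 i /\ le i d) -> q.[r i] = 0.
  move=> Hi; have /eqP := Hr i ltac:(lia); rewrite Hpq hornerM hornerXsubC mulf_eq0 subr_eq0.
  case/orP => [/eqP // | /eqP E]; have := Hinj i d.+1 ltac:(lia) ltac:(lia) E; lia.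
rewrite Hpq lead_coefM lead_coefXsubC mulr1 hornerM hornerXsubC (IH q) //=; last first.
  by move=> i j Hi Hj; apply: Hinj; lia.
exact: Rmult_assoc.
Qed.

End Chebyshev.

Lemma prod1_S N f : prod1 (S N) f = prod1 N f * f (S N).
Proof. reflexivity. Qed.

Lemma prod1_ext N f g :
  (forall i, (1 <= i <= N)%nat -> f i = g i) -> prod1 N f = prod1 N g.
Proof.
  induction N as [|N IH]; intros H; simpl; [reflexivity|].
  rewrite IH, H; [reflexivity|lia|]. intros i Hi; apply H; lia.
Qed.

Lemma prod1_mul N f g : prod1 N (fun i => f i * g i) = prod1 N f * prod1 N g.
Proof. induction N as [|N IH]; simpl; [ring|rewrite IH; ring]. Qed.

Lemma prod1_exchange N M (F : nat -> nat -> R) :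
  prod1 N (fun j => prod1 M (F j)) = prod1 M (fun k => prod1 N (fun j => F j k)).
Proof.
  induction N as [|N IH]; simpl.
  - induction M as [|M IHM]; simpl; [reflexivity|rewrite <- IHM; ring].
  - rewrite IH, <- prod1_mul; reflexivity.
Qed.

Lemma prod1_powerRZ N f z : powerRZ (prod1 N f) z = prod1 N (fun i => powerRZ (f i) z).
Proof.
  induction N as [|N IH]; simpl; [apply powerRZ_R1|].
  rewrite powerRZ_mult, IH; reflexivity.
Qed.

Lemma powerRZ_one a : powerRZ a 1 = a.
Proof. simpl; ring. Qed.

Lemma powerRZ_neg_one a : powerRZ a (-1) = / a.
Proof. simpl; rewrite Rmult_1_r; reflexivity. Qed.

Lemma powerRZ_sgnZ_sgnZ a j k :
  powerRZ (powerRZ a (sgnZ k)) (sgnZ j) = powerRZ a (sgnZ j * sgnZ k).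
Proof.
  unfold sgnZ; destruct (Nat.even j), (Nat.even k); simpl; rewrite ?Rmult_1_r, ?Rinv_inv; reflexivity.
Qed.

Lemma sgnZ_double i : sgnZ (2 * i) = 1%Z.
Proof. unfold sgnZ; rewrite Nat.even_mul; reflexivity. Qed.

Lemma sgnZ_double_pred i : (1 <= i)%nat -> sgnZ (2 * i - 1) = (-1)%Z.
Proof.
  intros Hi; replace (2 * i - 1)%nat with (S (2 * (i - 1))) by lia.
  unfold sgnZ; rewrite Nat.even_succ, Nat.odd_mul; reflexivity.
Qed.

Lemma prod1_alternating p (g : nat -> R) :
  prod1 (2 * S p - 1) (fun k => powerRZ (g k) (sgnZ k))
  = prod1 p (fun i => g (2 * i)%nat) / prod1 (S p) (fun i => g (2 * i - 1)%nat).
Proof.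
  induction p as [|p IH].
  - simpl; unfold Rdiv; rewrite !Rmult_1_r, !Rmult_1_l; reflexivity.
  - replace (2 * S (S p) - 1)%nat with (S (S (2 * S p - 1))) by lia.
    rewrite 2!(prod1_S _ (fun k => powerRZ (g k) (sgnZ k))), IH.
    rewrite (prod1_S p (fun i => g (2 * i)%nat)), (prod1_S (S p) (fun i => g (2 * i - 1)%nat)).
    replace (S (S (2 * S p - 1))) with (2 * S (S p) - 1)%nat by lia.
    replace (S (2 * S p - 1)) with (2 * S p)%nat by lia.
    rewrite sgnZ_double, sgnZ_double_pred by lia.
    rewrite powerRZ_one, powerRZ_neg_one; unfold Rdiv; rewrite !Rinv_mult; ring.
Qed.

Lemma cosh_add_sub c a : cosh (c + a) + cosh (c - a) = 2 * (cosh c * cosh a).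
Proof.
  unfold cosh; unfold Rminus; rewrite !Ropp_plus_distr, !exp_plus, !Ropp_involutive; field.
Qed.

Lemma sinh_add_sub c a : sinh (c + a) + sinh (c - a) = 2 * (sinh c * cosh a).
Proof.
  unfold sinh, cosh; unfold Rminus; rewrite !Ropp_plus_distr, !exp_plus, !Ropp_involutive; field.
Qed.

Lemma sinh_pos a : 0 < a -> 0 < sinh a.
Proof. intros Ha; rewrite <- sinh_0; apply sinh_lt, Ha. Qed.

Lemma cosh_pos a : 0 < cosh a.
Proof. unfold cosh; pose proof (exp_pos a); pose proof (exp_pos (- a)); lra. Qed.

Lemma INR_S_mul k a : INR (S k) * a = INR k * a + a.
Proof. rewrite S_INR; ring. Qed.

Lemma horner_T_cosh m a : poly.horner (Chebyshev.T m) (cosh a) = cosh (INR m * a).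
Proof.
  apply (Chebyshev.horner_T _ (fun k => cosh (INR k * a))); repeat split.
  - simpl; rewrite Rmult_0_l; apply cosh_0.
  - simpl; rewrite Rmult_1_l; reflexivity.
  - intros k; rewrite (INR_S_mul (S k)).
    replace (INR k * a) with (INR (S k) * a - a) by (rewrite INR_S_mul; ring).
    pose proof (cosh_add_sub (INR (S k) * a) a); lra.
Qed.

Lemma horner_U_sinh p a : 0 < a ->
  poly.horner (Chebyshev.U p) (cosh a) = sinh (INR (S p) * a) / sinh a.
Proof.
  intros Ha; pose proof (sinh_pos a Ha).
  apply (Chebyshev.horner_U _ (fun k => sinh (INR (S k) * a) / sinh a)); repeat split.
  - simpl; rewrite Rmult_1_l; field; lra.
  - rewrite INR_S_mul; simpl; rewrite Rmult_1_l.
    pose proof (sinh_add_sub a a) as E; rewrite Rminus_diag, sinh_0, Rplus_0_r in E.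
    rewrite E; field; lra.
  - intros k; rewrite (INR_S_mul (S (S k))).
    replace (INR (S k) * a) with (INR (S (S k)) * a - a) by (rewrite INR_S_mul; ring).
    pose proof (sinh_add_sub (INR (S (S k)) * a) a).
    field_simplify_eq; lra.
Qed.

Lemma horner_T_cos m t : poly.horner (Chebyshev.T m) (cos t) = cos (INR m * t).
Proof.
  apply (Chebyshev.horner_T _ (fun k => cos (INR k * t))); repeat split.
  - simpl; rewrite Rmult_0_l; apply cos_0.
  - simpl; rewrite Rmult_1_l; reflexivity.
  - intros k; rewrite (INR_S_mul (S k)).
    replace (INR k * t) with (INR (S k) * t - t) by (rewrite INR_S_mul; ring).
    rewrite cos_plus, cos_minus; ring.
Qed.

Lemma horner_U_sin p t : sin t <> 0 ->
  poly.horner (Chebyshev.U p) (cos t) = sin (INR (S p) * t) / sin t.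
Proof.
  intros Ht.
  apply (Chebyshev.horner_U _ (fun k => sin (INR (S k) * t) / sin t)); repeat split.
  - simpl; rewrite Rmult_1_l; field; exact Ht.
  - rewrite INR_S_mul; simpl; rewrite Rmult_1_l, sin_plus; field; exact Ht.
  - intros k; rewrite (INR_S_mul (S (S k))).
    replace (INR (S k) * t) with (INR (S (S k)) * t - t) by (rewrite INR_S_mul; ring).
    rewrite sin_plus, sin_minus; field; exact Ht.
Qed.

Definition cheb_node (m k : nat) : R := cos (PI * INR k / (2 * INR m)).

Lemma cheb_angle_bounds m k : (1 <= k <= 2 * m - 1)%nat -> 0 < PI * INR k / (2 * INR m) < PI.
Proof.
  intros Hk; pose proof PI_RGT_0.
  assert (0 < INR k) by (apply lt_0_INR; lia).
  assert (INR k < 2 * INR m).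
  { replace (2 * INR m) with (INR (2 * m)) by (rewrite mult_INR; simpl; ring). apply lt_INR; lia. }
  split.
  - apply Rdiv_lt_0_compat; nra.
  - apply (Rmult_lt_reg_r (2 * INR m)); [lra|].
    unfold Rdiv; rewrite Rmult_assoc, Rinv_l, Rmult_1_r by lra; nra.
Qed.

Lemma cheb_node_inj m k l : (1 <= k <= 2 * m - 1)%nat -> (1 <= l <= 2 * m - 1)%nat ->
  cheb_node m k = cheb_node m l -> k = l.
Proof.
  intros Hk Hl E.
  pose proof (cheb_angle_bounds m k Hk); pose proof (cheb_angle_bounds m l Hl).
  apply cos_inj in E; [|lra|lra].
  assert (0 < INR m) by (apply lt_0_INR; lia).
  pose proof PI_RGT_0.
  apply INR_eq, (Rmult_eq_reg_l (PI / (2 * INR m))); [|apply Rgt_not_eq, Rdiv_lt_0_compat; lra].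
  unfold Rdiv in *; lra.
Qed.

Lemma horner_U_even_node p i : (1 <= i <= p)%nat ->
  poly.horner (Chebyshev.U p) (cheb_node (S p) (2 * i)) = 0.
Proof.
  intros Hi; pose proof (cheb_angle_bounds (S p) (2 * i) ltac:(lia)).
  unfold cheb_node; rewrite horner_U_sin by (apply Rgt_not_eq, sin_gt_0; lra).
  rewrite sin_eq_0_1; [unfold Rdiv; apply Rmult_0_l|].
  exists (Z.of_nat i); rewrite <- INR_IZR_INZ, mult_INR; simpl (INR 2).
  assert (0 < INR (S p)) by (apply lt_0_INR; lia).
  field; lra.
Qed.

Lemma horner_T_odd_node p i : (1 <= i <= S p)%nat ->
  poly.horner (Chebyshev.T (S p)) (cheb_node (S p) (2 * i - 1)) = 0.
Proof.
  intros Hi; unfold cheb_node; rewrite horner_T_cos.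
  apply cos_eq_0_1; exists (Z.of_nat (i - 1)).
  rewrite <- INR_IZR_INZ, !minus_INR, mult_INR by lia; simpl (INR 2); simpl (INR 1).
  assert (0 < INR (S p)) by (apply lt_0_INR; lia).
  field; lra.
Qed.

Lemma sinh_mul_div_sinh_prod p a : 0 < a ->
  sinh (INR (S p) * a) / sinh a = 2 ^ p * prod1 p (fun i => cosh a - cheb_node (S p) (2 * i)).
Proof.
  intros Ha; rewrite <- horner_U_sinh, <- Chebyshev.lead_coef_U by exact Ha.
  apply Chebyshev.horner_prod_roots; [apply Chebyshev.size_U| |].
  - intros i j Hi Hj E; apply cheb_node_inj in E; lia.
  - exact (horner_U_even_node p).
Qed.

Lemma cosh_mul_prod p a :
  cosh (INR (S p) * a) = 2 ^ p * prod1 (S p) (fun i => cosh a - cheb_node (S p) (2 * i - 1)).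
Proof.
  rewrite <- horner_T_cosh, <- Chebyshev.lead_coef_T.
  apply Chebyshev.horner_prod_roots; [apply Chebyshev.size_T| |].
  - intros i j Hi Hj E; apply cheb_node_inj in E; lia.
  - exact (horner_T_odd_node p).
Qed.

Lemma tanh_div_sinh_prod m a : (0 < m)%nat -> 0 < a ->
  tanh (INR m * a) / sinh a
  = prod1 (2 * m - 1) (fun k => powerRZ (cosh a - cheb_node m k) (sgnZ k)).
Proof.
  intros Hm Ha; destruct m as [|p]; [lia|]; rewrite prod1_alternating.
  pose proof (sinh_mul_div_sinh_prod p a Ha) as HU; pose proof (cosh_mul_prod p a) as HT.
  set (PE := prod1 p _) in *; set (PO := prod1 (S p) _) in *.
  pose proof (cosh_pos (INR (S p) * a)); pose proof (sinh_pos a Ha).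
  assert (2 ^ p <> 0) by (apply pow_nonzero; lra).
  assert (PO <> 0) by (intros E; rewrite E, Rmult_0_r in HT; lra).
  unfold tanh; replace (sinh (INR (S p) * a) / cosh (INR (S p) * a) / sinh a)
    with (sinh (INR (S p) * a) / sinh a / cosh (INR (S p) * a)) by (field; lra).
  rewrite HU, HT; field; auto.
Qed.

Lemma signed_prod_tanh_div_sinh m n x (alpha : nat -> R) : (0 < m)%nat ->
  (forall j, (1 <= j <= 2 * n - 1)%nat -> 0 < alpha j /\ cosh (alpha j) + cheb_node n j = x) ->
  prod1 (2 * n - 1) (fun j => powerRZ (tanh (INR m * alpha j) / sinh (alpha j)) (sgnZ j))
  = prod1 (2 * n - 1) (fun j => prod1 (2 * m - 1) (fun k =>
      powerRZ (x - cheb_node n j - cheb_node m k) (sgnZ j * sgnZ k))).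
Proof.
  intros Hm Halpha; apply prod1_ext; intros j Hj.
  destruct (Halpha j Hj) as [Hpos Hx].
  rewrite tanh_div_sinh_prod, prod1_powerRZ by assumption.
  apply prod1_ext; intros k _.
  rewrite powerRZ_sgnZ_sgnZ; do 2 f_equal; lra.
Qed.

Theorem mainTheorem14 (m n : nat) (x : R) (alpha beta : nat -> R) :
  (0 < m)%nat -> (0 < n)%nat -> 2 < x ->
  (forall j, (1 <= j <= 2 * n - 1)%nat ->
     0 < alpha j /\ cosh (alpha j) + cos (PI * INR j / (2 * INR n)) = x) ->
  (forall k, (1 <= k <= 2 * m - 1)%nat ->
     0 < beta k /\ cosh (beta k) + cos (PI * INR k / (2 * INR m)) = x) ->
  prod1 (2 * n - 1)
    (fun j => powerRZ (tanh (INR m * alpha j) / sinh (alpha j)) (sgnZ j))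
  = prod1 (2 * m - 1)
    (fun k => powerRZ (tanh (INR n * beta k) / sinh (beta k)) (sgnZ k)).
Proof.
  (* [2 < x] only guarantees that the alpha_j and beta_k exist. *)
  intros Hm Hn _ Halpha Hbeta.
  rewrite (signed_prod_tanh_div_sinh m n x alpha Hm Halpha),
    (signed_prod_tanh_div_sinh n m x beta Hn Hbeta), prod1_exchange.
  apply prod1_ext; intros k _; apply prod1_ext; intros j _.
  f_equal; [ring | apply Z.mul_comm].
Qed.
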